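(* Let $\Delta\subseteq\mathbb{Q}^2$ be a Fano triangle of Gorenstein index $g$. If the reduced weight system of $\Delta$ is $(1,1,1)$, then $g$ is odd.
   Context: A Fano triangle is a 2-dimensional simplex with primitive vertices in $\mathbb{Z}^2$ and the origin in its interior; its Gorenstein index is the least $g\ge1$ with $g\Delta^*$ having integral vertices, $\Delta^*=\{u:\langle u,v\rangle\ge-1\ \forall v\in\Delta\}$. For vertices $v_0,v_1,v_2$, the weight system is $(q_0,q_1,q_2)$ with $q_i=|\det(v_j:j\ne i)|$, and its reduction is the tuple divided by $\gcd(q_0,q_1,q_2)$. *)

From mathcomp Require Import all_boot all_order all_algebra.
Set Implicit Arguments. Unset Strict Implicit. Unset Printing Implicit Defensive.
Import Order.TTheory GRing.Theory Num.Theory.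
Local Open Scope ring_scope.

Definition pt := (rat * rat)%type.
Definition lpt := (int * int)%type.

Definition ofZ (v : lpt) : pt := ((v.1)%:~R, (v.2)%:~R).
Definition dotp (u v : pt) : rat := u.1 * v.1 + u.2 * v.2.
Definition ptadd (u v : pt) : pt := (u.1 + v.1, u.2 + v.2).
Definition ptscale (t : rat) (u : pt) : pt := (t * u.1, t * u.2).

Definition primitive (v : lpt) : Prop := gcdz v.1 v.2 = 1%N.

Definition detZ (v w : lpt) : int := v.1 * w.2 - v.2 * w.1.

Definition triangle (v0 v1 v2 : lpt) (p : pt) : Prop :=
  exists a0 a1 a2 : rat, [/\ 0 <= a0, 0 <= a1, 0 <= a2, a0 + a1 + a2 = 1 &
    p = ptadd (ptscale a0 (ofZ v0)) (ptadd (ptscale a1 (ofZ v1)) (ptscale a2 (ofZ v2)))].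

Definition origin_in_interior (v0 v1 v2 : lpt) : Prop :=
  exists eps : rat, 0 < eps /\
    forall p : pt, `|p.1| < eps -> `|p.2| < eps -> triangle v0 v1 v2 p.

Definition fano_triangle (v0 v1 v2 : lpt) : Prop :=
  [/\ detZ (v1.1 - v0.1, v1.2 - v0.2) (v2.1 - v0.1, v2.2 - v0.2) != 0,
      primitive v0, primitive v1, primitive v2 & origin_in_interior v0 v1 v2].

Definition dual_set (v0 v1 v2 : lpt) (u : pt) : Prop :=
  forall v : pt, triangle v0 v1 v2 v -> -1 <= dotp u v.

Definition dilate (g : nat) (S : pt -> Prop) (p : pt) : Prop :=
  exists u, S u /\ p = ptscale g%:R u.

Definition is_vertex (S : pt -> Prop) (u : pt) : Prop :=
  S u /\ ~ (exists a b : pt, exists t : rat,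
             [/\ S a, S b, a <> b, 0 < t < 1 &
                 u = ptadd (ptscale t a) (ptscale (1 - t) b)]).

Definition integral_pt (p : pt) : Prop :=
  p.1 \is a Num.int /\ p.2 \is a Num.int.

Definition has_integral_vertices (S : pt -> Prop) : Prop :=
  forall u, is_vertex S u -> integral_pt u.

Definition gorenstein_index (v0 v1 v2 : lpt) (g : nat) : Prop :=
  [/\ (1 <= g)%N, has_integral_vertices (dilate g (dual_set v0 v1 v2)) &
      forall h : nat, (1 <= h)%N -> has_integral_vertices (dilate h (dual_set v0 v1 v2)) ->
        (g <= h)%N].

Definition weights (v0 v1 v2 : lpt) : nat * nat * nat :=
  (`|detZ v1 v2|%N, `|detZ v0 v2|%N, `|detZ v0 v1|%N).

Definition reduced_weights (v0 v1 v2 : lpt) : nat * nat * nat :=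
  let: (q0, q1, q2) := weights v0 v1 v2 in
  let d := gcdn (gcdn q0 q1) q2 in (q0 %/ d, q1 %/ d, q2 %/ d)%N.

From Pilot Require Import Defs.
From mathcomp Require Import all_boot all_order all_algebra.
From mathcomp Require Import zify ring lra.
Set Implicit Arguments. Unset Strict Implicit. Unset Printing Implicit Defensive.
Import Order.TTheory GRing.Theory Num.Theory.
Local Open Scope ring_scope.

(* Proof of Proposition 4.3.  Write [D = det(v0, v1)].  Reduced weights
   (1,1,1) mean that the three determinants [|det(v_j, v_k)|] are equal and
   nonzero; since the barycentric coordinates of the interior point 0 are
   proportional to them, they are all 1/3 and [v0 + v1 + v2 = 0].  Then each
   dilate [h Delta^*] is the triangle [-h <= <p,v0>, -h <= <p,v1>,
   <p,v0> + <p,v1> <= h], whose vertices have coordinates (-h,-h), (2h,-h),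
   (-h,2h); so a vertex [u] of [h Delta^*] has [D u] integral.  Moreover
   [v0], [v1], [v0 + v1] are primitive, hence nonzero mod 2, which forces [D]
   to be odd.  Now if [g = 2h] were even, every vertex [u] of [h Delta^*]
   would have [2u] (a vertex of [g Delta^*]) and [D u] integral, hence [u]
   integral, contradicting the minimality of the Gorenstein index [g]. *)

(* A pair of linearly independent vectors [a], [b] gives coordinates
   [p |-> (dotp p a, dotp p b)] on Q^2; [of_coords] is the inverse map. *)
Definition det2 (a b : pt) : rat := a.1 * b.2 - a.2 * b.1.

Definition of_coords (a b : pt) (s t : rat) : pt :=
  ((s * b.2 - t * a.2) / det2 a b, (t * a.1 - s * b.1) / det2 a b).

Definition std_triangle (h s t : rat) : Prop := [/\ -h <= s, -h <= t & s + t <= h].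

Definition coord_triangle (a b : pt) (h : rat) (p : pt) : Prop :=
  std_triangle h (dotp p a) (dotp p b).

Section Coordinates.
Variables a b : pt.
Hypothesis det_ab : det2 a b != 0.

Lemma dotp_of_coords_l (s t : rat) : dotp (of_coords a b s t) a = s.
Proof. by rewrite /dotp /of_coords /det2 /=; field; exact: det_ab. Qed.

Lemma dotp_of_coords_r (s t : rat) : dotp (of_coords a b s t) b = t.
Proof. by rewrite /dotp /of_coords /det2 /=; field; exact: det_ab. Qed.

Lemma of_coordsK (p : pt) : of_coords a b (dotp p a) (dotp p b) = p.
Proof.
by case: p => p1 p2; rewrite /dotp /of_coords /det2 /=; congr (_, _); field;
  exact: det_ab.
Qed.

End Coordinates.

Lemma dotp_scale (c : rat) (u a : pt) : dotp (ptscale c u) a = c * dotp u a.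
Proof. by rewrite /dotp /ptscale /=; ring. Qed.

Lemma dotp_cramer (u a b : pt) :
  u.1 * det2 a b = dotp u a * b.2 - dotp u b * a.2 /\
  u.2 * det2 a b = dotp u b * a.1 - dotp u a * b.1.
Proof. by rewrite /dotp /det2; split; ring. Qed.

Lemma det2_ofZ (v w : lpt) : det2 (ofZ v) (ofZ w) = (Defs.detZ v w)%:~R.
Proof. by rewrite /det2 /Defs.detZ /ofZ /= rmorphB !rmorphM. Qed.

Lemma norm_det2_ofZ (v w : lpt) : `|det2 (ofZ v) (ofZ w)| = (`|Defs.detZ v w|%N)%:R.
Proof. by rewrite det2_ofZ -intr_norm -abszE. Qed.

Lemma exists_pos_below (x y : rat) : 0 < x -> 0 < y ->
  exists2 e : rat, 0 < e & e <= x /\ e <= y.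
Proof.
move=> x_gt0 y_gt0; exists (Num.min x y); first by rewrite lt_min x_gt0.
by split; rewrite ge_min lexx ?orbT.
Qed.

Section TriangleVertices.
Variables (a b : pt) (h : rat).
Hypothesis det_ab : det2 a b != 0.

(* If [p] can be moved both ways along a nonzero direction [(d1, d2)] (in
   coordinates) without leaving the triangle, it is the midpoint of two
   distinct points of the triangle, hence not a vertex. *)
Lemma slack_not_vertex (p : pt) (e d1 d2 : rat) :
  0 < e -> (d1 != 0) || (d2 != 0) ->
  std_triangle h (dotp p a + e * d1) (dotp p b + e * d2) ->
  std_triangle h (dotp p a - e * d1) (dotp p b - e * d2) ->
  ~ is_vertex (coord_triangle a b h) p.
Proof.
move=> e_gt0 d_neq0 plus_in minus_in [_ []].
set s := dotp p a; set t := dotp p b.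
set p_plus := of_coords a b (s + e * d1) (t + e * d2).
set p_minus := of_coords a b (s - e * d1) (t - e * d2).
exists p_plus, p_minus, (1 / 2); split.
- by rewrite /coord_triangle dotp_of_coords_l // dotp_of_coords_r.
- by rewrite /coord_triangle dotp_of_coords_l // dotp_of_coords_r.
- move=> /(congr1 (fun q => (dotp q a, dotp q b))) [].
  rewrite !dotp_of_coords_l // !dotp_of_coords_r // => eq_s eq_t.
  have [/eqP ed1 /eqP ed2] : e * d1 = 0 /\ e * d2 = 0 by split; lra.
  move: ed1 ed2; rewrite !mulf_eq0 (gt_eqF e_gt0) /=.
  by case/orP: d_neq0 => /negPf ->.
- by apply/andP; split; lra.
- rewrite -{1}(of_coordsK det_ab p) -/s -/t /p_plus /p_minus.
  by rewrite /of_coords /ptadd /ptscale /det2 /=; congr (_, _); field; exact: det_ab.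
Qed.

(* A vertex of the triangle has two tight constraints, so it is one of the
   three corners, with coordinates (-h,-h), (2h,-h) or (-h,2h). *)
Lemma vertex_coords (p : pt) :
  is_vertex (coord_triangle a b h) p ->
  [\/ dotp p a = -h /\ dotp p b = -h,
       dotp p a = 2 * h /\ dotp p b = -h |
       dotp p a = -h /\ dotp p b = 2 * h].
Proof.
move=> vert_p; have [[s_ge t_ge st_le] _] := vert_p.
have slack := @slack_not_vertex p.
case: (ltrP (-h) (dotp p a)) => [s_gt | s_le].
- case: (ltrP (-h) (dotp p b)) => [t_gt | t_le].
    (* both lower bounds are slack: move along (1,-1) *)
    have [e e_gt0 [e_s e_t]] : exists2 e : rat,
        0 < e & e <= dotp p a + h /\ e <= dotp p b + h.
      by apply: exists_pos_below; lra.
    by exfalso; apply: (slack e 1 (-1) e_gt0 _ _ _ vert_p);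
      rewrite ?oner_eq0 //; split; lra.
  case: (ltrP (dotp p a + dotp p b) h) => [st_lt | st_ge].
    (* only the bound on [t] is tight: move along (1,0) *)
    have [e e_gt0 [e_s e_st]] : exists2 e : rat,
        0 < e & e <= dotp p a + h /\ e <= h - dotp p a - dotp p b.
      by apply: exists_pos_below; lra.
    by exfalso; apply: (slack e 1 0 e_gt0 _ _ _ vert_p);
      rewrite ?oner_eq0 //; split; lra.
  by constructor 2; split; lra.
- case: (ltrP (-h) (dotp p b)) => [t_gt | t_le]; last by constructor 1; split; lra.
  case: (ltrP (dotp p a + dotp p b) h) => [st_lt | st_ge].
    (* only the bound on [s] is tight: move along (0,1) *)
    have [e e_gt0 [e_t e_st]] : exists2 e : rat,
        0 < e & e <= dotp p b + h /\ e <= h - dotp p a - dotp p b.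
      by apply: exists_pos_below; lra.
    by exfalso; apply: (slack e 0 1 e_gt0 _ _ _ vert_p);
      rewrite ?oner_eq0 ?orbT //; split; lra.
  by constructor 3; split; lra.
Qed.

End TriangleVertices.

Lemma is_vertex_ext (S T : pt -> Prop) (u : pt) :
  (forall p, S p <-> T p) -> is_vertex S u -> is_vertex T u.
Proof.
move=> S_T [S_u not_mid]; split; first exact/S_T.
move=> [x [y [t [T_x T_y x_neq_y t01 u_eq]]]]; apply: not_mid.
by exists x, y, t; split => //; apply/S_T.
Qed.

Lemma is_vertex_scale (S T : pt -> Prop) (c : rat) (u : pt) : c != 0 ->
  (forall p, T p <-> S (ptscale c^-1 p)) -> is_vertex S u ->
  is_vertex T (ptscale c u).
Proof.
move=> c_neq0 T_S [S_u not_mid].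
have scaleK p : ptscale c^-1 (ptscale c p) = p.
  by case: p => p1 p2; rewrite /ptscale /= !mulKf.
have scaleVK p : ptscale c (ptscale c^-1 p) = p.
  by case: p => p1 p2; rewrite /ptscale /= !mulVKf.
split; first by apply/T_S; rewrite scaleK.
move=> [x [y [t [T_x T_y x_neq_y t01 cu_eq]]]]; apply: not_mid.
exists (ptscale c^-1 x), (ptscale c^-1 y), t; split => //; try exact/T_S.
- by move=> /(congr1 (ptscale c)); rewrite !scaleVK.
- rewrite -(scaleK u) cu_eq; case: x {T_x x_neq_y cu_eq} => x1 x2.
  by case: y {T_y} => y1 y2; rewrite /ptadd /ptscale /=; congr (_, _); ring.
Qed.

Lemma dilate_mul (S : pt -> Prop) (m n : nat) (p : pt) : (0 < m)%N ->
  dilate (m * n) S p <-> dilate n S (ptscale m%:R^-1 p).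
Proof.
move=> m_gt0; have m_neq0 : (m%:R : rat) != 0 by rewrite pnatr_eq0 -lt0n.
split=> -[u [S_u p_eq]]; exists u; split => //.
  by rewrite p_eq /ptscale /= natrM; congr (_, _); field.
case: p p_eq => p1 p2 [p1_eq p2_eq]; rewrite /ptscale /= natrM -!mulrA.
by rewrite -p1_eq -p2_eq !mulVKf.
Qed.

Lemma dual_set_iff (v0 v1 v2 : lpt) (u : pt) : dual_set v0 v1 v2 u <->
  [/\ -1 <= dotp u (ofZ v0), -1 <= dotp u (ofZ v1) & -1 <= dotp u (ofZ v2)].
Proof.
split=> [dual_u | [u0 u1 u2] v [a0 [a1 [a2 [a0_ge0 a1_ge0 a2_ge0 a_sum ->]]]]].
  split; apply: dual_u; [exists 1, 0, 0 | exists 0, 1, 0 | exists 0, 0, 1];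
    by split => //; rewrite /ptadd /ptscale /=; congr (_, _); ring.
have -> : dotp u (ptadd (ptscale a0 (ofZ v0))
                        (ptadd (ptscale a1 (ofZ v1)) (ptscale a2 (ofZ v2)))) =
    a0 * dotp u (ofZ v0) + a1 * dotp u (ofZ v1) + a2 * dotp u (ofZ v2).
  by rewrite /dotp /ptadd /ptscale /=; ring.
nra.
Qed.

Lemma dilate_dual_iff (v0 v1 : lpt) (h : nat) (p : pt) : (0 < h)%N ->
  dilate h (dual_set v0 v1 (- v0.1 - v1.1, - v0.2 - v1.2)) p <->
  coord_triangle (ofZ v0) (ofZ v1) h%:R p.
Proof.
move=> h_gt0; have H_gt0 : (0 : rat) < h%:R by rewrite ltr0n.
have dotp_v2 u : dotp u (ofZ (- v0.1 - v1.1, - v0.2 - v1.2)) =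
    - (dotp u (ofZ v0) + dotp u (ofZ v1)).
  by rewrite /dotp /ofZ /= !rmorphB !rmorphN /=; ring.
split=> [[u [/dual_set_iff [u0 u1 u2] ->]] | [p0 p1 p01]].
  by rewrite dotp_v2 in u2; rewrite /coord_triangle !dotp_scale; split; nra.
exists (ptscale h%:R^-1 p); split.
  apply/dual_set_iff; rewrite dotp_v2 !dotp_scale.
  have Hinv_gt0 : (0 : rat) < h%:R^-1 by rewrite invr_gt0.
  have HinvK : h%:R^-1 * (h%:R : rat) = 1 by rewrite mulVf // gt_eqF.
  by split; nra.
by case: p {p0 p1 p01} => p1 p2; rewrite /ptscale /=; congr (_, _); field;
  rewrite gt_eqF.
Qed.

Lemma reduced_ones (q0 q1 q2 : nat) :
  let d := gcdn (gcdn q0 q1) q2 in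
  (q0 %/ d, q1 %/ d, q2 %/ d)%N = (1, 1, 1)%N ->
  [/\ q0 = d, q1 = d, q2 = d & (0 < d)%N].
Proof.
move=> d [q0_d q1_d q2_d].
have d_gt0 : (0 < d)%N by case: (posnP d) q0_d => [-> | //]; rewrite divn0.
have d_q0 : (d %| q0)%N by rewrite (dvdn_trans (dvdn_gcdl _ _)) ?dvdn_gcdl.
have d_q1 : (d %| q1)%N by rewrite (dvdn_trans (dvdn_gcdl _ _)) ?dvdn_gcdr.
have d_q2 : (d %| q2)%N by rewrite dvdn_gcdr.
split=> //; [rewrite -(divnK d_q0) q0_d | rewrite -(divnK d_q1) q1_d |
  rewrite -(divnK d_q2) q2_d]; exact: mul1n.
Qed.

Lemma equal_weights (v0 v1 v2 : lpt) :
  reduced_weights v0 v1 v2 = (1, 1, 1)%N ->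
  [/\ absz (Defs.detZ v1 v2) = absz (Defs.detZ v0 v1),
      absz (Defs.detZ v0 v2) = absz (Defs.detZ v0 v1) & Defs.detZ v0 v1 != 0].
Proof.
rewrite /reduced_weights /weights => /reduced_ones [q0_d q1_d q2_d d_gt0].
split; [exact: etrans q0_d (esym q2_d) | exact: etrans q1_d (esym q2_d) |].
by rewrite -absz_eq0 q2_d -lt0n.
Qed.

Lemma barycentric_det (P0 P1 P2 : pt) (a0 a1 a2 : rat) :
  (0, 0) = ptadd (ptscale a0 P0) (ptadd (ptscale a1 P1) (ptscale a2 P2)) ->
  a0 * det2 P0 P1 = a2 * det2 P1 P2 /\ a1 * det2 P0 P1 = - (a2 * det2 P0 P2).
Proof.
case: P0 P1 P2 => [x0 y0] [x1 y1] [x2 y2]; rewrite /ptadd /ptscale /det2 /=.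
case=> sum_x sum_y.
have wedge1 : (a0 * x0 + (a1 * x1 + a2 * x2)) * y1 -
              (a0 * y0 + (a1 * y1 + a2 * y2)) * x1 = 0 by rewrite -sum_x -sum_y; ring.
have wedge0 : x0 * (a0 * y0 + (a1 * y1 + a2 * y2)) -
              y0 * (a0 * x0 + (a1 * x1 + a2 * x2)) = 0 by rewrite -sum_x -sum_y; ring.
by split; lra.
Qed.

(* With equal nonzero weights, the barycentric coordinates of the interior
   point 0 are all 1/3, so the vertices sum to zero. *)
Lemma vertices_sum_zero (v0 v1 v2 : lpt) :
  absz (Defs.detZ v1 v2) = absz (Defs.detZ v0 v1) ->
  absz (Defs.detZ v0 v2) = absz (Defs.detZ v0 v1) -> Defs.detZ v0 v1 != 0 ->
  origin_in_interior v0 v1 v2 -> v2 = (- v0.1 - v1.1, - v0.2 - v1.2).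
Proof.
move=> w0 w1 det01_neq0 [eps [eps_gt0 /(_ (0, 0))]].
rewrite normr0 => /(_ eps_gt0 eps_gt0) [a0 [a1 [a2 [a0_ge0 a1_ge0 a2_ge0 a_sum]]]].
move=> origin_eq; have [bary0 bary1] := barycentric_det origin_eq.
have N_neq0 : `|det2 (ofZ v0) (ofZ v1)| != 0.
  by rewrite normr_eq0 det2_ofZ intr_eq0.
have a0_a2 : a0 = a2.
  apply: (mulIf N_neq0); have := congr1 Num.norm bary0.
  by rewrite !normrM (ger0_norm a0_ge0) (ger0_norm a2_ge0) !norm_det2_ofZ w0.
have a1_a2 : a1 = a2.
  apply: (mulIf N_neq0); have := congr1 Num.norm bary1.
  by rewrite normrN !normrM (ger0_norm a1_ge0) (ger0_norm a2_ge0) !norm_det2_ofZ w1.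
have a2_eq : a2 = 3^-1 by rewrite a0_a2 a1_a2 in a_sum; lra.
case: origin_eq; rewrite a0_a2 a1_a2 a2_eq /ofZ /= => sum_x sum_y.
by case: v2 {w0 w1 bary0 bary1} sum_x sum_y => x2 y2 /= sum_x sum_y; congr (_, _);
  apply: (@intr_inj rat); rewrite rmorphB rmorphN /=; lra.
Qed.

Lemma even_or_odd (z : int) : exists q, z = 2 * q \/ z = 2 * q + 1.
Proof. by exists (z %/ 2)%Z; lia. Qed.

(* If [v0], [v1] and [v0 + v1] are all nonzero modulo 2, they are the three
   nonzero vectors of (Z/2)^2, so [det(v0, v1)] is odd. *)
Lemma det_odd (x0 y0 x1 y1 : int) :
  ~~ (2 %| x0)%Z || ~~ (2 %| y0)%Z -> ~~ (2 %| x1)%Z || ~~ (2 %| y1)%Z ->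
  ~~ (2 %| x0 + x1)%Z || ~~ (2 %| y0 + y1)%Z ->
  ~~ (2 %| x0 * y1 - y0 * x1)%Z.
Proof.
have [[a [->|->]] [b [->|->]]] := (even_or_odd x0, even_or_odd y0);
have [[c [->|->]] [d [->|->]]] := (even_or_odd x1, even_or_odd y1); nia.
Qed.

Lemma primitive_not_even (x y : int) :
  gcdz x y = 1%N -> ~~ (2 %| x)%Z || ~~ (2 %| y)%Z.
Proof. by move=> xy_coprime; rewrite -negb_and -dvdz_gcd xy_coprime. Qed.

(* If [2 x] is an integer and so is [x D] for an odd [D], then so is [x]:
   indeed [x = x D - 2 x k] when [D = 2 k + 1]. *)
Lemma int_of_double_odd_multiple (x : rat) (D : int) : ~~ (2 %| D)%Z ->
  2 * x \is a Num.int -> x * D%:~R \is a Num.int -> x \is a Num.int.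
Proof.
move=> D_odd x2_int xD_int; have [k D_eq] : exists k, D = 2 * k + 1.
  by exists (D %/ 2)%Z; lia.
have -> : x = x * D%:~R - 2 * x * k%:~R by rewrite D_eq intrD intrM /=; ring.
by rewrite rpredB // rpredM // intr_int.
Qed.

(* A vertex [u] of
   [h Delta^*] has integral coordinates [<u,v0>], [<u,v1>] (it is a corner),
   so [det(v0, v1) u] is integral, while [2u] is a vertex of [2h Delta^*]. *)
Lemma halve_integral_dilate (v0 v1 : lpt) (h : nat) :
  let dual := dual_set v0 v1 (- v0.1 - v1.1, - v0.2 - v1.2) in
  ~~ (2 %| Defs.detZ v0 v1)%Z -> (0 < h)%N ->
  has_integral_vertices (dilate (2 * h) dual) ->
  has_integral_vertices (dilate h dual).
Proof.
move=> dual D_odd h_gt0 int_2h u vert_u.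
have det_neq0 : det2 (ofZ v0) (ofZ v1) != 0.
  by rewrite det2_ofZ intr_eq0; apply: contraNneq D_odd => ->.
have [u1_2_int u2_2_int] : integral_pt (ptscale 2 u).
  apply: int_2h; apply: (is_vertex_scale (c := 2%:R)) vert_u => // p.
  exact: dilate_mul.
have [ua_int ub_int] :
    dotp u (ofZ v0) \is a Num.int /\ dotp u (ofZ v1) \is a Num.int.
  have vert_tri := is_vertex_ext (fun p => dilate_dual_iff _ _ p h_gt0) vert_u.
  by case: (vertex_coords det_neq0 vert_tri) => -[-> ->];
    rewrite ?rpredN ?rpredM ?natr_int.
have [u1_det u2_det] := dotp_cramer u (ofZ v0) (ofZ v1).
rewrite det2_ofZ in u1_det u2_det.
split; apply: (int_of_double_odd_multiple D_odd) => //.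
  by rewrite u1_det rpredB // rpredM // intr_int.
by rewrite u2_det rpredB // rpredM // intr_int.
Qed.

Theorem proposition4p3 (v0 v1 v2 : lpt) (g : nat) :
  fano_triangle v0 v1 v2 ->
  gorenstein_index v0 v1 v2 g ->
  reduced_weights v0 v1 v2 = (1, 1, 1)%N ->
  odd g.
Proof.
move=> [_ prim0 prim1 prim2 interior] [g_gt0 int_g g_min] red_w.
have [w0 w1 det_neq0] := equal_weights red_w.
have v2_eq := vertices_sum_zero w0 w1 det_neq0 interior.
have D_odd : ~~ (2 %| Defs.detZ v0 v1)%Z.
  move: prim2; rewrite v2_eq => /primitive_not_even /=.
  rewrite -!opprD !rpredN => prim2.
  exact: det_odd (primitive_not_even prim0) (primitive_not_even prim1) prim2.
apply: contraT => g_even; set h := g./2.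
have g_eq : g = (2 * h)%N by rewrite -[LHS]odd_double_half (negPf g_even) -mul2n.
have h_gt0 : (0 < h)%N by move: g_gt0; rewrite g_eq; case: (h).
have h_int : has_integral_vertices (dilate h (dual_set v0 v1 v2)).
  by rewrite v2_eq in int_g *; apply: halve_integral_dilate; rewrite -?g_eq.
by have := g_min h h_gt0 h_int; lia.
Qed.
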